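(* Let $i=\sqrt{-1}$ and let $\zeta_8$ be a primitive $8$-th root of unity. (1) $\{\operatorname{Tr}(M) : M\in G_q(i)\}=\{0,\pm1,\pm2,\pm i,\pm 2i,\pm1\pm i\ (\text{arbitrary signs})\}=\{0,\ c,\ \sqrt{2}\,\zeta_8\,c,\ 2c : c=i^j,\ j=0,1,2,3\}$. (2) For $M_q\in G_q$, let $f(q)=\operatorname{Tr} M_q$. If $f(1)$ is a multiple of $4$, then $f(i)=0$.
   Context: Let $q$ be a formal parameter and let $R_q=\begin{pmatrix} q & 1\\ 0 & 1\end{pmatrix}$, $S_q=\begin{pmatrix} 0 & -q^{-1}\\ 1 & 0\end{pmatrix}\in \mathrm{GL}(2,\mathbb{Z}[q,q^{-1}])$. Let $G_q=\langle R_q,S_q\rangle$ be the group they generate. For $\zeta\in\mathbb{C}^*$, set $G_q(\zeta)=\{M_q|_{q=\zeta} : M_q\in G_q\}\subset \mathrm{GL}(2,\mathbb{C})$. *)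

From HB Require Import structures.
From mathcomp Require Import all_boot all_order all_algebra.
From mathcomp Require Import algC.
Set Implicit Arguments. Unset Strict Implicit. Unset Printing Implicit Defensive.
Import Order.TTheory GRing.Theory Num.Theory.
Local Open Scope ring_scope.

(* Elements of G_q = <R_q, S_q> are represented by words in the generators
   and their inverses; M_q|_{q=z} is the corresponding product of the
   specialized generator matrices (specialization q |-> z is a ring
   homomorphism Z[q,q^-1] -> C, so it commutes with products/inverses). *)
Inductive gen := GR | GS | GRinv | GSinv.

Definition Rmx {K : comUnitRingType} (z : K) : 'M[K]_2 :=
  \matrix_(i < 2, j < 2)
    if (i == 0 :> nat) then (if (j == 0 :> nat) then z else 1)
    else (if (j == 0 :> nat) then 0 else 1).

Definition Smx {K : comUnitRingType} (z : K) : 'M[K]_2 :=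
  \matrix_(i < 2, j < 2)
    if (i == 0 :> nat) then (if (j == 0 :> nat) then 0 else - z^-1)
    else (if (j == 0 :> nat) then 1 else 0).

Definition gen_mx {K : comUnitRingType} (z : K) (g : gen) : 'M[K]_2 :=
  match g with
  | GR => Rmx z
  | GS => Smx z
  | GRinv => invmx (Rmx z)
  | GSinv => invmx (Smx z)
  end.

Definition eval_word {K : comUnitRingType} (z : K) (w : seq gen) : 'M[K]_2 :=
  foldr (fun g M => gen_mx z g *m M) 1%:M w.

Definition trace_set_i : seq algC :=
  [:: 0; 1; -1; 2; -2; ('i : algC); - 'i; 2 * 'i; - (2 * 'i);
      1 + 'i; 1 - 'i; -1 + 'i; -1 - 'i].

From HB Require Import structures.
From mathcomp Require Import all_boot all_order all_algebra.
From mathcomp Require Import algC ring.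
Import GRing.Theory Num.Theory.
Local Open Scope ring_scope.

Set Implicit Arguments.
Unset Strict Implicit.
Unset Printing Implicit Defensive.

(* At q = i the generators have entries in Z[i], since -q^-1 = i.  Pairing the
   specialization q = i with the specialization q = 1 reduced modulo 4, every
   word evaluates to a 2x2 matrix over Z/4 x Z[i], and only finitely many such
   matrices arise: closing the identity under the four generators yields a
   finite list which is checked to be closed, so it contains every word.
   Reading off traces on that list gives (1) and the implication
   tr M(1) = 0 mod 4 => tr M(i) = 0, i.e. (2); short explicit words realise
   each trace.  For the second description in (1), sqrt 2 * zeta_8 is a root
   of X^4 + 4, hence one of the +-1 +- i, and its products with the powers
   of i run through all four of them. *)

Section Quad.
Variable R : pzRingType.

Definition quad := (R * R * R * R)%type.

Definition qmul (A B : quad) : quad :=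
  let '(a, b, c, d) := A in let '(e, f, g, h) := B in
  (a * e + b * g, a * f + b * h, c * e + d * g, c * f + d * h).

Definition qtr (A : quad) : R := let '(a, _, _, d) := A in a + d.

Definition quad_mx (A : quad) : 'M[R]_2 :=
  let '(a, b, c, d) := A in
  \matrix_(i < 2, j < 2)
    if i == 0 :> nat then (if j == 0 :> nat then a else b)
    else (if j == 0 :> nat then c else d).

Lemma quad_mxM A B : quad_mx (qmul A B) = quad_mx A *m quad_mx B.
Proof.
case: A => [[[a b] c] d]; case: B => [[[e f] g] h].
apply/matrixP => i j; rewrite !mxE !big_ord_recl big_ord0 !mxE addr0.
by case: i => [[|[|i]] ?] //; case: j => [[|[|j]] ?].
Qed.

Lemma quad_mx1 : quad_mx (1, 0, 0, 1) = 1%:M.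
Proof.
by apply/matrixP => i j; rewrite !mxE; case: i => [[|[|i]] ?] //; case: j => [[|[|j]] ?].
Qed.

Lemma mxtrace_quad A : \tr (quad_mx A) = qtr A.
Proof.
by case: A => [[[a b] c] d]; rewrite /mxtrace !big_ord_recl big_ord0 !mxE addr0.
Qed.

(* [zi] stands for z^-1, so that the generators can be specialized in rings
   such as Z[i] and Z/4 without a unit structure. *)
Definition gen_quad (z zi : R) (g : gen) : quad :=
  match g with
  | GR => (z, 1, 0, 1)
  | GS => (0, - zi, 1, 0)
  | GRinv => (zi, - zi, 0, 1)
  | GSinv => (0, 1, - z, 0)
  end.

Definition word_quad (z zi : R) (w : seq gen) : quad :=
  foldr (fun g => qmul (gen_quad z zi g)) (1, 0, 0, 1) w.

Lemma word_quad_mem (z zi : R) (P : seq quad) :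
    (1, 0, 0, 1) \in P -> (forall g A, A \in P -> qmul (gen_quad z zi g) A \in P) ->
  forall w, word_quad z zi w \in P.
Proof. by move=> P1 PM; elim=> //= g w; apply: PM. Qed.

End Quad.

Arguments quad_mx : simpl never.

Definition qmap (R S : Type) (f : R -> S) (A : R * R * R * R) : S * S * S * S :=
  let '(a, b, c, d) := A in (f a, f b, f c, f d).

Section QuadMorphism.
Variables (R S : pzRingType) (f : {rmorphism R -> S}).

Lemma qmapM (A B : quad R) : qmap f (qmul A B) = qmul (qmap f A) (qmap f B).
Proof.
by case: A => [[[a b] c] d]; case: B => [[[e k] g] h]; rewrite /= !rmorphD !rmorphM.
Qed.

Lemma qtr_qmap (A : quad R) : qtr (qmap f A) = f (qtr A).
Proof. by case: A => [[[a b] c] d]; rewrite /= rmorphD. Qed.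

Lemma word_quad_map (z zi : R) w :
  qmap f (word_quad z zi w) = word_quad (f z) (f zi) w.
Proof.
elim: w => [|g w IHw] /=; first by rewrite rmorph0 rmorph1.
rewrite qmapM IHw; congr qmul.
by case: g; rewrite /= ?rmorph0 ?rmorph1 ?rmorphN.
Qed.

End QuadMorphism.

Lemma mulmx1_invmx (K : comUnitRingType) n (A B : 'M[K]_n) :
  A *m B = 1%:M -> invmx A = B.
Proof.
move=> AB1; have [uA _] := mulmx1_unit AB1.
by rewrite -[B]mul1mx -(mulVmx uA) -mulmxA AB1 mulmx1.
Qed.

Section Specialization.
Variables (K : comUnitRingType) (z : K).
Hypothesis z_unit : z \is a GRing.unit.

Lemma gen_mx_quad g : gen_mx z g = quad_mx (gen_quad z z^-1 g).
Proof.
have Rz : Rmx z = quad_mx (z, 1, 0, 1) by apply/matrixP => i j; rewrite !mxE.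
have Sz : Smx z = quad_mx (0, - z^-1, 1, 0) by apply/matrixP => i j; rewrite !mxE.
case: g => /=; rewrite ?Rz ?Sz //; apply: mulmx1_invmx;
  rewrite -quad_mxM -quad_mx1; congr quad_mx;
  rewrite /= !(mulr1, mul1r, mulr0, mul0r, addr0, add0r).
  by rewrite mulrN divrr // addNr.
by rewrite mulrNN mulVr.
Qed.

Lemma eval_word_quad w : eval_word z w = quad_mx (word_quad z z^-1 w).
Proof.
elim: w => [|g w IHw] /=; first by rewrite quad_mx1.
by rewrite IHw gen_mx_quad quad_mxM.
Qed.

End Specialization.

Record gaussint := GaussInt { gre : int; gim : int }.

Definition gauss_pair (x : gaussint) : int * int := (gre x, gim x).
Definition pair_gauss (p : int * int) : gaussint := GaussInt p.1 p.2.
Lemma gauss_pairK : cancel gauss_pair pair_gauss. Proof. by case. Qed.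
HB.instance Definition _ := Countable.copy gaussint (can_type gauss_pairK).

Definition gadd (x y : gaussint) := GaussInt (gre x + gre y) (gim x + gim y).
Definition gopp (x : gaussint) := GaussInt (- gre x) (- gim x).
Definition gmul (x y : gaussint) :=
  GaussInt (gre x * gre y - gim x * gim y) (gre x * gim y + gim x * gre y).

Fact gaddA : associative gadd.
Proof. by move=> [a b] [c d] [e f]; rewrite /gadd /= !addrA. Qed.
Fact gaddC : commutative gadd.
Proof. by move=> [a b] [c d]; rewrite /gadd /= addrC [b + _]addrC. Qed.
Fact gadd0 : left_id (GaussInt 0 0) gadd.
Proof. by move=> [a b]; rewrite /gadd /= !add0r. Qed.
Fact gaddN : left_inverse (GaussInt 0 0) gopp gadd.
Proof. by move=> [a b]; rewrite /gadd /= !addNr. Qed.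
HB.instance Definition _ := GRing.isZmodule.Build gaussint gaddA gaddC gadd0 gaddN.

Fact gmulA : associative gmul.
Proof. by move=> [a b] [c d] [e f]; rewrite /gmul /=; congr GaussInt; ring. Qed.
Fact gmulC : commutative gmul.
Proof. by move=> [a b] [c d]; rewrite /gmul /=; congr GaussInt; ring. Qed.
Fact gmul1 : left_id (GaussInt 1 0) gmul.
Proof. by move=> [a b]; rewrite /gmul /=; congr GaussInt; ring. Qed.
Fact gmulDl : left_distributive gmul gadd.
Proof. by move=> [a b] [c d] [e f]; rewrite /gmul /gadd /=; congr GaussInt; ring. Qed.
Fact gauss1_neq0 : GaussInt 1 0 != GaussInt 0 0. Proof. by []. Qed.
HB.instance Definition _ :=
  GRing.Zmodule_isComNzRing.Build gaussint gmulA gmulC gmul1 gmulDl gauss1_neq0.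

Definition gauss_i : gaussint := GaussInt 0 1.

Definition gaussC (x : gaussint) : algC := (gre x)%:~R + (gim x)%:~R * 'i.
Arguments gaussC : simpl never.

Lemma mulCii : 'i * 'i = -1 :> algC. Proof. by rewrite -expr2 sqrCi. Qed.

Fact gaussC_is_zmod_morphism : zmod_morphism gaussC.
Proof. by move=> [a b] [c d]; rewrite /gaussC /= !(intrD, intrN); ring. Qed.
Fact gaussC_is_monoid_morphism : monoid_morphism gaussC.
Proof.
split; first by rewrite /gaussC /= mulr0z mul0r addr0.
by move=> [a b] [c d]; rewrite /gaussC /= !(intrD, intrN, intrM); ring: mulCii.
Qed.
HB.instance Definition _ :=
  GRing.isZmodMorphism.Build gaussint algC gaussC gaussC_is_zmod_morphism.
HB.instance Definition _ :=
  GRing.isMonoidMorphism.Build gaussint algC gaussC gaussC_is_monoid_morphism.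

Lemma gaussC_i : gaussC gauss_i = 'i.
Proof. by rewrite /gaussC /= mulr0z mul1r add0r. Qed.

Definition gens : seq gen := [:: GR; GS; GRinv; GSinv].

Lemma all_gens (p : pred gen) : all p gens -> forall g, p g.
Proof. by rewrite /= andbT => /and4P [? ? ? ?] []. Qed.

Definition orbit_step (R : pzRingType) (z zi : R) (P : seq (quad R)) : seq (quad R) :=
  undup (P ++ [seq qmul (gen_quad z zi g) A | A <- P, g <- gens]).

(* The first component follows q = 1 modulo 4, the second q = i. *)
Definition Z4xZi := ('Z_4 * gaussint)%type.
Definition q1i : Z4xZi := (1, gauss_i).
Definition q1i_inv : Z4xZi := (1, - gauss_i).

(* Nine rounds reach the fixed point, as certified by [orbit_i_closed]. *)
Definition orbit_i : seq (quad Z4xZi) :=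
  iter 9 (orbit_step q1i q1i_inv) [:: (1, 0, 0, 1)].

Lemma orbit_i_closed :
  all (fun A => all (fun g => qmul (gen_quad q1i q1i_inv g) A \in orbit_i) gens) orbit_i.
Proof. by vm_compute. Qed.

Lemma word_quad_orbit_i w : word_quad q1i q1i_inv w \in orbit_i.
Proof.
apply: word_quad_mem; first by vm_compute.
by move=> g A /(allP orbit_i_closed)/all_gens; apply.
Qed.

Definition gauss_diag : seq gaussint :=
  [:: 1 + gauss_i; 1 - gauss_i; -1 + gauss_i; -1 - gauss_i].

Definition gauss_traces : seq gaussint :=
  [:: 0; 1; -1; 2; -2; gauss_i; - gauss_i; 2 * gauss_i; - (2 * gauss_i)] ++ gauss_diag.

Lemma gauss_diagE : [:: 1 + 'i; 1 - 'i; -1 + 'i; -1 - 'i] = map gaussC gauss_diag.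
Proof. by rewrite /= !(rmorph1, rmorphN, rmorphD, rmorphB) /= gaussC_i. Qed.

Lemma trace_set_iE : trace_set_i = map gaussC gauss_traces.
Proof.
rewrite map_cat -gauss_diagE /=.
by rewrite !(rmorph0, rmorph1, rmorphN, rmorphM, rmorph_nat) /= gaussC_i.
Qed.

Lemma orbit_i_traces : all (fun A => (qtr A).2 \in gauss_traces) orbit_i.
Proof. by vm_compute. Qed.

Lemma orbit_i_trace_mod4 : all (fun A => ((qtr A).1 == 0) ==> ((qtr A).2 == 0)) orbit_i.
Proof. by vm_compute. Qed.

Definition trace_witnesses : seq (seq gen) :=
  [:: [::]; [:: GR]; [:: GS]; [:: GRinv]; [:: GS; GR]; [:: GSinv; GR]; [:: GS; GS];
      [:: GRinv; GS]; [:: GSinv; GSinv]; [:: GS; GS; GR]; [:: GSinv; GSinv; GRinv];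
      [:: GS; GR; GS; GR]; [:: GS; GS; GS; GS]].

Lemma trace_witnessesP :
  all (fun t => has (fun w => (qtr (word_quad q1i q1i_inv w)).2 == t) trace_witnesses)
    gauss_traces.
Proof. by vm_compute. Qed.

Lemma mxtrace_eval_word_i w :
  \tr (eval_word 'i w) = gaussC (qtr (word_quad q1i q1i_inv w)).2.
Proof.
have i_unit : ('i : algC) \is a GRing.unit by rewrite unitfE neq0Ci.
rewrite eval_word_quad // mxtrace_quad invCi.
have -> : word_quad 'i (- 'i) w = qmap gaussC (qmap snd (word_quad q1i q1i_inv w)).
  by rewrite !word_quad_map /= rmorphN /= gaussC_i.
by rewrite (qtr_qmap gaussC) qtr_qmap.
Qed.

Lemma mxtrace_eval_word_1 w :
  \tr (eval_word (1 : algC) w) = (qtr (word_quad 1 1 w : quad int))%:~R.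
Proof.
rewrite eval_word_quad ?unitr1 // mxtrace_quad invr1.
have -> : word_quad (1 : algC) 1 w = qmap intr (word_quad 1 1 w).
  by rewrite word_quad_map rmorph1.
by rewrite qtr_qmap.
Qed.

Lemma qtr_word_quad_1_mod4 w :
  (qtr (word_quad 1 1 w : quad int))%:~R = (qtr (word_quad q1i q1i_inv w)).1 :> 'Z_4.
Proof.
rewrite -qtr_qmap word_quad_map rmorph1.
by rewrite -[in RHS]qtr_qmap word_quad_map.
Qed.

Lemma trace_image_i t : (exists w, \tr (eval_word 'i w) = t) <-> t \in trace_set_i.
Proof.
rewrite trace_set_iE; split => [[w <-]|].
  by rewrite mxtrace_eval_word_i map_f // (allP orbit_i_traces _ (word_quad_orbit_i w)).
case/mapP=> s s_tr ->.
have /(has_nthP [::]) [n _ /eqP tr_w] := allP trace_witnessesP s s_tr.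
by exists (nth [::] trace_witnesses n); rewrite mxtrace_eval_word_i tr_w.
Qed.

Lemma trace_i_eq0_of_trace1_mod4 w :
    (exists k : int, \tr (eval_word (1 : algC) w) = (4 * k)%:~R) ->
  \tr (eval_word ('i : algC) w) = 0.
Proof.
case=> k; rewrite mxtrace_eval_word_1 => /intr_inj tr_4k.
have := allP orbit_i_trace_mod4 _ (word_quad_orbit_i w).
rewrite -qtr_word_quad_1_mod4 tr_4k intrM rmorph_nat pchar_Zp // mul0r eqxx => /eqP tr_i.
by rewrite mxtrace_eval_word_i tr_i rmorph0.
Qed.

Definition rotated_traces (v : gaussint) : seq gaussint :=
  flatten [seq [:: 0; gauss_i ^+ j; v * gauss_i ^+ j; 2 * gauss_i ^+ j] | j <- iota 0 4].

Lemma rotated_traces_perm :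
  all (fun v => perm_eq (undup (rotated_traces v)) gauss_traces) gauss_diag.
Proof. by vm_compute. Qed.

Lemma trace_set_i_rotations (u t : algC) : u \in [:: 1 + 'i; 1 - 'i; -1 + 'i; -1 - 'i] ->
  t \in trace_set_i <->
  exists j, (j < 4)%N /\ (t = 0 \/ t = 'i ^+ j \/ t = u * 'i ^+ j \/ t = 2 * 'i ^+ j).
Proof.
rewrite gauss_diagE => /mapP [v v_diag ->].
have rot_v : rotated_traces v =i gauss_traces.
  by move=> s; rewrite -(perm_mem (allP rotated_traces_perm v v_diag)) mem_undup.
rewrite trace_set_iE -(eq_mem_map gaussC rot_v) map_flatten -map_comp.
split => [/flatten_mapP [j] | [j [j4 t_j]]]; last apply/flatten_mapP.
  rewrite mem_iota => j4 /=; rewrite !(rmorph0, rmorphM, rmorphXn, rmorph_nat) /= gaussC_i.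
  by rewrite !inE => /or4P [] /eqP ->; exists j; split; tauto.
exists j; first by rewrite mem_iota.
rewrite /= !(rmorph0, rmorphM, rmorphXn, rmorph_nat) /= gaussC_i !inE.
by case: t_j => [|[|[|]]] ->; rewrite eqxx ?orbT.
Qed.

Lemma prim8_expr4 (z : algC) : 8.-primitive_root z -> z ^+ 4 = -1.
Proof.
move=> prim_z; have := sqrf_eq1 (z ^+ 4).
rewrite -exprM (prim_expr_order prim_z) eqxx -(prim_order_dvd prim_z) /=.
by move/esym/eqP.
Qed.

Lemma sqrt2_prim8 (z : algC) : 8.-primitive_root z ->
  sqrtC 2 * z \in [:: 1 + 'i; 1 - 'i; -1 + 'i; -1 - 'i].
Proof.
move=> /prim8_expr4 z4; set u := sqrtC 2 * z.
have u4 : u ^+ 4 = -4 by rewrite exprMn z4 (exprM _ 2 2) sqrtCK; ring.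
have : (u - (1 + 'i)) * (u - (1 - 'i)) * (u - (-1 + 'i)) * (u - (-1 - 'i)) = 0.
  by rewrite -[RHS](subrr (u ^+ 4)) {2}u4; ring: mulCii.
by move/eqP; rewrite !mulf_eq0 !subr_eq0 !inE -!orbA.
Qed.

Theorem corollary3p5 (z8 : algC) (hz8 : 8.-primitive_root z8) :
  (* (1), first description *)
  (forall t : algC,
     (exists w : seq gen, \tr (eval_word ('i : algC) w) = t) <-> t \in trace_set_i) /\
  (* (1), second description *)
  (forall t : algC,
     (exists w : seq gen, \tr (eval_word ('i : algC) w) = t) <->
     (exists j : nat, (j < 4)%N /\
        let c := ('i : algC) ^+ j in
        t = 0 \/ t = c \/ t = sqrtC 2 * z8 * c \/ t = 2 * c)) /\
  (* (2) *)
  (forall w : seq gen,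
     (exists k : int, \tr (eval_word (1 : algC) w) = (4 * k)%:~R) ->
     \tr (eval_word ('i : algC) w) = 0).
Proof.
split; first exact: trace_image_i.
split; last exact: trace_i_eq0_of_trace1_mod4.
move=> t; apply: iff_trans (trace_image_i t) _.
exact: trace_set_i_rotations (sqrt2_prim8 hz8).
Qed.
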